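(* Let $\lambda_0\le0\le\lambda_1$ be real and $a<b$. Then for all $t\in[a,b]$, $$\Omega^{a,b}_{\lambda_0,\lambda_1,0}(t)\le(b-a)\left|G^{a,b}_{\lambda_0,\lambda_1}(t,t)\right|,\qquad G^{a,b}_{\lambda_0,\lambda_1}(t,t):=\frac{\Phi_{(\lambda_0,\lambda_1)}(t-b)\,\Phi_{(-\lambda_0,-\lambda_1)}(t-a)}{\Phi_{(-\lambda_0,-\lambda_1)}(b-a)}.$$
   Context: For real $\lambda_0,\dots,\lambda_N$, $L_{(\lambda_0,\dots,\lambda_N)}=\prod_{j=0}^N(\frac{d}{dt}-\lambda_j)$, $E(\lambda_0,\dots,\lambda_N)=\{f\in C^{N+1}(\mathbb{R}):L_{(\lambda_0,\dots,\lambda_N)}f=0\}$, and the fundamental function $\Phi_{(\lambda_0,\dots,\lambda_N)}$ is the unique element of $E(\lambda_0,\dots,\lambda_N)$ with $\Phi^{(k)}(0)=0$ for $0\le k\le N-1$ and $\Phi^{(N)}(0)=1$ (e.g. $\Phi_{(\lambda_0,\lambda_1)}(t)=\frac{e^{\lambda_1t}-e^{\lambda_0t}}{\lambda_1-\lambda_0}$ for $\lambda_0\ne\lambda_1$). For real $\lambda_0,\lambda_1$ and $a<b$, $\Omega^{a,b}_{\lambda_0,\lambda_1,0}$ is the unique $u\in E(\lambda_0,\lambda_1,0)$ with $u(a)=u(b)=0$ and $L_{(\lambda_0,\lambda_1)}u\equiv-1$. ($G^{a,b}_{\lambda_0,\lambda_1}(t,t)$ is the diagonal of the Green function of $L_{(\lambda_0,\lambda_1)}$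 on $[a,b]$ with zero boundary conditions.) *)

From Stdlib Require Import Reals.
From Coquelicot Require Import Coquelicot.
Open Scope R_scope.

Definition Cn (n : nat) (f : R -> R) : Prop :=
  (forall k t, (k <= n)%nat -> ex_derive_n f k t) /\
  (forall t, continuous (Derive_n f n) t).

Definition Dm (l : R) (f : R -> R) : R -> R := fun t => Derive f t - l * f t.

Definition L2 (l0 l1 : R) (f : R -> R) : R -> R := Dm l0 (Dm l1 f).

Definition L3 (l0 l1 l2 : R) (f : R -> R) : R -> R := Dm l0 (Dm l1 (Dm l2 f)).

Definition E2 (l0 l1 : R) (f : R -> R) : Prop :=
  Cn 2 f /\ forall t, L2 l0 l1 f t = 0.

Definition E3 (l0 l1 l2 : R) (f : R -> R) : Prop :=
  Cn 3 f /\ forall t, L3 l0 l1 l2 f t = 0.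

(* phi is the fundamental function Phi_(l0,l1): the element of E(l0,l1)
   with phi(0) = 0 and phi'(0) = 1 (unique by ODE uniqueness). *)
Definition is_fundamental2 (l0 l1 : R) (phi : R -> R) : Prop :=
  E2 l0 l1 phi /\ phi 0 = 0 /\ Derive phi 0 = 1.

(* u is Omega^{a,b}_{l0,l1,0}: the element of E(l0,l1,0) with
   u(a) = u(b) = 0 and L_(l0,l1) u = -1 identically (unique). *)
Definition is_Omega (a b l0 l1 : R) (u : R -> R) : Prop :=
  E3 l0 l1 0 u /\ u a = 0 /\ u b = 0 /\ forall t, L2 l0 l1 u t = -1.

From Stdlib Require Import Reals Lra Psatz.
From Coquelicot Require Import Coquelicot.
Open Scope R_scope.

(* Write s = l0 + l1 and q = - l0 l1.  Then u'' = s u' + q u - 1,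
   phi'' = s phi' + q phi, and psi solves the adjoint equation
   psi'' = - s psi' + q psi.  For a solution W of the adjoint equation the
   Lagrange form  u' W - s u W - u W'  has derivative - W (Lagrange identity).
   Taking W = psi(. - a) and W = psi(. - b), which vanish at a and b as u does,
   and using that psi is increasing (psi' > 0 because l0 <= 0 <= l1), the mean
   value theorem bounds both Lagrange forms at t.  A linear combination of the
   two forms is u(t) times the Wronskian of psi(. - a), psi(. - b), which by
   Abel's identity equals psi(b - a) e^{s(b - t)}.  Finally phi = e^{s x} psi
   by uniqueness for the initial value problem, which turns the bound into the
   Green-function expression of the theorem. *)

Lemma is_derive_eq_val (f : R -> R) (x l l' : R) :
  is_derive f x l -> l = l' -> is_derive f x l'.
Proof. intros H <-; exact H. Qed.

Lemma is_derive_Rmult (f g : R -> R) (x df dg : R) :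
  is_derive f x df -> is_derive g x dg ->
  is_derive (fun t => f t * g t) x (df * g x + f x * dg).
Proof. intros Hf Hg; apply (is_derive_mult f g x df dg Hf Hg); intros; apply Rmult_comm. Qed.

(* Sum and difference rules stated with the operations of R, so that the
   resulting derivative values are closed by [ring]. *)
Lemma is_derive_Rplus (f g : R -> R) (x df dg : R) :
  is_derive f x df -> is_derive g x dg -> is_derive (fun t => f t + g t) x (df + dg).
Proof. intros Hf Hg; exact (is_derive_plus f g x df dg Hf Hg). Qed.

Lemma is_derive_Rminus (f g : R -> R) (x df dg : R) :
  is_derive f x df -> is_derive g x dg -> is_derive (fun t => f t - g t) x (df - dg).
Proof. intros Hf Hg; exact (is_derive_minus f g x df dg Hf Hg). Qed.

Lemma is_derive_shift (f : R -> R) (c x df : R) :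
  is_derive f (x - c) df -> is_derive (fun s => f (s - c)) x df.
Proof.
  intros H.
  assert (Hg : is_derive (fun s => s - c) x 1) by (auto_derive; auto; ring).
  eapply is_derive_eq_val; [apply (is_derive_comp f (fun s => s - c) x df 1 H Hg)|].
  unfold scal; simpl; unfold mult; simpl; ring.
Qed.

Lemma is_derive_exp_lin (l x : R) : is_derive (fun t => exp (l * t)) x (l * exp (l * x)).
Proof. auto_derive; auto; ring. Qed.

Lemma mvt_le (f df : R -> R) (x y : R) : x <= y ->
  (forall t, is_derive f t (df t)) ->
  exists c, x <= c <= y /\ f y - f x = df c * (y - x).
Proof.
  intros Hxy H.
  destruct (MVT_gen f x y df) as [c [Hc E]].
  - intros t _; apply H.
  - intros t _; apply continuity_pt_filterlim.
    apply (ex_derive_continuous (V := R_NormedModule)); eexists; apply H.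
  - rewrite Rmin_left, Rmax_right in Hc by lra. exists c; auto.
Qed.

Lemma const_of_zero_derive (f : R -> R) :
  (forall x, is_derive f x 0) -> forall x y, f x = f y.
Proof.
  intros H x y.
  destruct (Rle_dec x y) as [Hxy|Hxy].
  - destruct (mvt_le f (fun _ => 0) x y Hxy H) as [c [_ E]]; lra.
  - destruct (mvt_le f (fun _ => 0) y x ltac:(lra) H) as [c [_ E]]; lra.
Qed.

Lemma strict_incr_of_pos_derive (f df : R -> R) :
  (forall t, is_derive f t (df t)) -> (forall t, 0 < df t) ->
  forall x y, x < y -> f x < f y.
Proof.
  intros H Hpos x y Hxy.
  destruct (mvt_le f df x y ltac:(lra) H) as [c [_ E]].
  specialize (Hpos c); nra.
Qed.

Lemma increment_bounds (F W : R -> R) :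
  (forall x, is_derive F x (- W x)) -> (forall x y, x <= y -> W x <= W y) ->
  forall x y, x <= y -> - (y - x) * W y <= F y - F x <= - (y - x) * W x.
Proof.
  intros HF HW x y Hxy.
  destruct (mvt_le F (fun z => - W z) x y Hxy HF) as [c [Hc E]].
  rewrite E.
  assert (W x <= W c) by (apply HW; lra).
  assert (W c <= W y) by (apply HW; lra).
  split; nra.
Qed.

Lemma linear_ode_zero (y : R -> R) (l x0 : R) :
  (forall x, is_derive y x (l * y x)) -> y x0 = 0 -> forall x, y x = 0.
Proof.
  intros H H0 x.
  assert (Hz : forall t, is_derive (fun t => y t * exp (- l * t)) t 0).
  { intros t. eapply is_derive_eq_val.
    - apply is_derive_Rmult; [apply H | apply is_derive_exp_lin].
    - cbv beta; ring. }
  pose proof (const_of_zero_derive _ Hz x0 x) as E; simpl in E.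
  rewrite H0 in E.
  assert (exp (- l * x) > 0) by apply exp_pos. nra.
Qed.

Definition solves2 (p q r : R) (f fd fdd : R -> R) : Prop :=
  (forall x, is_derive f x (fd x)) /\ (forall x, is_derive fd x (fdd x)) /\
  (forall x, fdd x = p * fd x + q * f x + r).

Lemma L2_expand (l0 l1 : R) (f : R -> R) (t : R) :
  (forall x, ex_derive f x) -> ex_derive (Derive f) t ->
  L2 l0 l1 f t = Derive (Derive f) t - (l0 + l1) * Derive f t + l0 * l1 * f t.
Proof.
  intros H1 H2. unfold L2, Dm.
  rewrite Derive_minus, Derive_scal; auto; [ring|].
  apply ex_derive_scal, H1.
Qed.

Lemma solves2_of_L2 (n : nat) (l0 l1 c : R) (f : R -> R) :
  (2 <= n)%nat -> Cn n f -> (forall t, L2 l0 l1 f t = c) ->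
  solves2 (l0 + l1) (- (l0 * l1)) c f (Derive f) (Derive (Derive f)).
Proof.
  intros Hn [Hd _] HL.
  assert (D1 : forall x, ex_derive f x) by (intros x; exact (Hd 1%nat x ltac:(lia))).
  assert (D2 : forall x, ex_derive (Derive f) x) by (intros x; exact (Hd 2%nat x ltac:(lia))).
  split; [|split].
  - intros x; apply Derive_correct, D1.
  - intros x; apply Derive_correct, D2.
  - intros x. specialize (HL x). rewrite L2_expand in HL by auto. lra.
Qed.

Lemma solves2_shift (p q r c : R) (f fd fdd : R -> R) :
  solves2 p q r f fd fdd ->
  solves2 p q r (fun x => f (x - c)) (fun x => fd (x - c)) (fun x => fdd (x - c)).
Proof.
  intros [Hf [Hfd E]]. split; [|split]; intros x.
  - apply is_derive_shift, Hf.
  - apply is_derive_shift, Hfd.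
  - apply E.
Qed.

Lemma solves2_exp_twist (p q : R) (f fd fdd : R -> R) :
  solves2 (- p) q 0 f fd fdd ->
  solves2 p q 0 (fun x => exp (p * x) * f x)
    (fun x => exp (p * x) * (p * f x + fd x))
    (fun x => exp (p * x) * (p * (p * f x + fd x) + (p * fd x + fdd x))).
Proof.
  intros [Hf [Hfd E]]. split; [|split]; intros x.
  - eapply is_derive_eq_val; [apply is_derive_Rmult; [apply is_derive_exp_lin | apply Hf]|].
    cbv beta; ring.
  - eapply is_derive_eq_val.
    + apply is_derive_Rmult; [apply is_derive_exp_lin|].
      apply (is_derive_Rplus (fun x => p * f x) fd); [apply is_derive_scal, Hf | apply Hfd].
    + cbv beta; ring.
  - rewrite E; ring.
Qed.

(* Uniqueness for the initial value problem when the characteristic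
   polynomial has the real roots l0, l1: factor through two first-order
   equations. *)
Lemma solves2_unique (l0 l1 x0 : R) (f fd fdd g gd gdd : R -> R) :
  solves2 (l0 + l1) (- (l0 * l1)) 0 f fd fdd ->
  solves2 (l0 + l1) (- (l0 * l1)) 0 g gd gdd ->
  f x0 = g x0 -> fd x0 = gd x0 -> forall x, f x = g x.
Proof.
  intros [Hf [Hfd Ef]] [Hg [Hgd Eg]] H0 Hd0.
  assert (Hh : forall x, is_derive (fun x => f x - g x) x (fd x - gd x))
    by (intros x; apply is_derive_Rminus; auto).
  assert (Hk : forall x, (fd x - gd x) - l1 * (f x - g x) = 0).
  { apply (linear_ode_zero (fun x => (fd x - gd x) - l1 * (f x - g x)) l0 x0).
    - intros x. eapply is_derive_eq_val.
      + apply is_derive_Rminus; [apply is_derive_Rminus; auto | apply is_derive_scal, Hh].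
      + cbv beta; rewrite Ef, Eg; ring.
    - rewrite H0, Hd0; ring. }
  intros x. apply Rminus_diag_uniq.
  apply (linear_ode_zero (fun x => f x - g x) l1 x0); [|lra].
  intros y. eapply is_derive_eq_val; [apply Hh|]. specialize (Hk y); lra.
Qed.

Lemma adjoint_first_integral (l0 l1 : R) (psi psid psidd : R -> R) :
  solves2 (- (l0 + l1)) (- (l0 * l1)) 0 psi psid psidd ->
  psi 0 = 0 -> psid 0 = 1 ->
  forall x, psid x + l1 * psi x = exp (- l0 * x).
Proof.
  intros [Hp [Hpd E]] p0 pd0 x. apply Rminus_diag_uniq.
  apply (linear_ode_zero (fun x => psid x + l1 * psi x - exp (- l0 * x)) (- l0) 0).
  - intros y. eapply is_derive_eq_val.
    + apply is_derive_Rminus; [apply is_derive_Rplus; [apply Hpd | apply is_derive_scal, Hp]|].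
      apply is_derive_exp_lin.
    + cbv beta; rewrite E; ring.
  - rewrite p0, pd0, !Rmult_0_r, exp_0; ring.
Qed.

(* Indeed (psi e^{l1 x})' = e^{(l1 - l0) x} > 0 gives
   sign psi = sign x, and then psi' = e^{- l1 x} - l0 psi > 0 for x >= 0 and
   psi' = e^{- l0 x} - l1 psi > 0 for x <= 0. *)
Lemma adjoint_fundamental_increasing (l0 l1 : R) (psi psid psidd : R -> R) :
  l0 <= 0 -> 0 <= l1 ->
  solves2 (- (l0 + l1)) (- (l0 * l1)) 0 psi psid psidd ->
  psi 0 = 0 -> psid 0 = 1 -> forall x, 0 < psid x.
Proof.
  intros Hl0 Hl1 Hpsi p0 pd0.
  assert (Hpsi' : solves2 (- (l1 + l0)) (- (l1 * l0)) 0 psi psid psidd)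
    by (rewrite Rplus_comm, Rmult_comm; exact Hpsi).
  pose proof (adjoint_first_integral l0 l1 _ _ _ Hpsi p0 pd0) as I1.
  pose proof (adjoint_first_integral l1 l0 _ _ _ Hpsi' p0 pd0) as I0.
  assert (Hmono : forall x y, x < y -> psi x * exp (l1 * x) < psi y * exp (l1 * y)).
  { apply (strict_incr_of_pos_derive _ (fun x => exp (- l0 * x) * exp (l1 * x))).
    - intros x. destruct Hpsi as [Hp _]. eapply is_derive_eq_val.
      + apply is_derive_Rmult; [apply Hp | apply is_derive_exp_lin].
      + cbv beta; rewrite <- (I1 x); ring.
    - intros x; apply Rmult_lt_0_compat; apply exp_pos. }
  intros x.
  assert (exp (l1 * x) > 0) by apply exp_pos.
  destruct (Rle_dec 0 x) as [Hx|Hx].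
  - assert (0 <= psi x).
    { destruct Hx as [Hx| <-]; [|lra].
      specialize (Hmono 0 x Hx). rewrite p0 in Hmono. nra. }
    specialize (I0 x). assert (exp (- l1 * x) > 0) by apply exp_pos. nra.
  - assert (psi x <= 0).
    { specialize (Hmono x 0 ltac:(lra)). rewrite p0 in Hmono. nra. }
    specialize (I1 x). assert (exp (- l0 * x) > 0) by apply exp_pos. nra.
Qed.

Lemma lagrange_identity (p q r : R) (u ud udd W Wd Wdd : R -> R) :
  solves2 p q r u ud udd -> solves2 (- p) q 0 W Wd Wdd ->
  forall x, is_derive (fun x => ud x * W x - p * u x * W x - u x * Wd x) x (r * W x).
Proof.
  intros [Hu [Hud Eu]] [HW [HWd EW]] x. eapply is_derive_eq_val.
  - apply is_derive_Rminus; [apply is_derive_Rminus|].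
    + apply is_derive_Rmult; [apply Hud | apply HW].
    + apply (is_derive_Rmult (fun x => p * u x)); [apply is_derive_scal, Hu | apply HW].
    + apply is_derive_Rmult; [apply Hu | apply HWd].
  - cbv beta; rewrite Eu, EW; ring.
Qed.

Lemma wronskian_abel (p q : R) (Z Zd Zdd Y Yd Ydd : R -> R) :
  solves2 (- p) q 0 Z Zd Zdd -> solves2 (- p) q 0 Y Yd Ydd ->
  forall x, is_derive (fun x => (Z x * Yd x - Y x * Zd x) * exp (p * x)) x 0.
Proof.
  intros [HZ [HZd EZ]] [HY [HYd EY]] x. eapply is_derive_eq_val.
  - apply (is_derive_Rmult (fun x => Z x * Yd x - Y x * Zd x)); [|apply is_derive_exp_lin].
    apply is_derive_Rminus; apply is_derive_Rmult; auto.
  - cbv beta; rewrite EZ, EY; ring.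
Qed.

Section OmegaEstimate.

Variables (p q a b : R) (u ud udd psi psid psidd : R -> R).
Hypothesis Hab : a < b.
Hypothesis Hu : solves2 p q (-1) u ud udd.
Hypothesis Hua : u a = 0.
Hypothesis Hub : u b = 0.
Hypothesis Hpsi : solves2 (- p) q 0 psi psid psidd.
Hypothesis Hpsi0 : psi 0 = 0.
Hypothesis Hpsid0 : psid 0 = 1.
Hypothesis Hpsid_pos : forall x, 0 < psid x.

Definition lagrange_form (c x : R) : R :=
  ud x * psi (x - c) - p * u x * psi (x - c) - u x * psid (x - c).

Lemma psi_incr : forall x y, x <= y -> psi x <= psi y.
Proof.
  intros x y [Hxy| ->]; [|lra]. left.
  apply (strict_incr_of_pos_derive psi psid); [apply Hpsi | exact Hpsid_pos | exact Hxy].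
Qed.

Lemma lagrange_form_derive (c : R) :
  forall x, is_derive (lagrange_form c) x (- psi (x - c)).
Proof.
  intros x. eapply is_derive_eq_val.
  - apply (lagrange_identity p q (-1) u ud udd _ _ _ Hu (solves2_shift _ _ _ c _ _ _ Hpsi)).
  - cbv beta; ring.
Qed.

(* Both Lagrange forms vanish at their base point, where u and psi(. - c)
   vanish; monotonicity of psi then bounds them at t. *)
Lemma lagrange_left (t : R) : a <= t -> - (t - a) * psi (t - a) <= lagrange_form a t.
Proof.
  intros Ht.
  assert (E : lagrange_form a a = 0) by (unfold lagrange_form; rewrite Hua, Rminus_diag, Hpsi0; ring).
  destruct (increment_bounds (lagrange_form a) (fun x => psi (x - a)) (lagrange_form_derive a)
    ltac:(intros x y ?; apply psi_incr; lra) a t Ht). lra.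
Qed.

Lemma lagrange_right (t : R) : t <= b -> (b - t) * psi (t - b) <= lagrange_form b t.
Proof.
  intros Ht.
  assert (E : lagrange_form b b = 0) by (unfold lagrange_form; rewrite Hub, Rminus_diag, Hpsi0; ring).
  destruct (increment_bounds (lagrange_form b) (fun x => psi (x - b)) (lagrange_form_derive b)
    ltac:(intros x y ?; apply psi_incr; lra) t b Ht). lra.
Qed.

(* The Wronskian of psi(. - a) and psi(. - b), evaluated through Abel's
   identity at x = b. *)
Lemma wronskian_value (t : R) :
  (psi (t - a) * psid (t - b) - psi (t - b) * psid (t - a)) * exp (p * (t - b)) = psi (b - a).
Proof.
  pose proof (const_of_zero_derive _ (wronskian_abel p q _ _ _ _ _ _
    (solves2_shift _ _ _ a _ _ _ Hpsi) (solves2_shift _ _ _ b _ _ _ Hpsi)) t b) as E.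
  simpl in E. rewrite Rminus_diag, Hpsi0, Hpsid0 in E.
  replace (p * (t - b)) with (p * t + - (p * b)) by ring.
  rewrite exp_plus, exp_Ropp, <- Rmult_assoc, E.
  field. apply Rgt_not_eq, exp_pos.
Qed.

Lemma omega_estimate (t : R) : a <= t <= b ->
  u t * psi (b - a) <= - (b - a) * (exp (p * (t - b)) * psi (t - b)) * psi (t - a).
Proof.
  intros Ht.
  pose proof (lagrange_left t ltac:(lra)) as HL.
  pose proof (lagrange_right t ltac:(lra)) as HR.
  assert (HZ : 0 <= psi (t - a)) by (rewrite <- Hpsi0; apply psi_incr; lra).
  assert (HY : psi (t - b) <= 0) by (rewrite <- Hpsi0; apply psi_incr; lra).
  assert (Hcomb : psi (t - b) * lagrange_form a t - psi (t - a) * lagrange_form b t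
                  = u t * (psi (t - a) * psid (t - b) - psi (t - b) * psid (t - a)))
    by (unfold lagrange_form; ring).
  assert (Hbound : u t * (psi (t - a) * psid (t - b) - psi (t - b) * psid (t - a))
                   <= - (b - a) * psi (t - b) * psi (t - a)) by nra.
  rewrite <- (wronskian_value t).
  assert (exp (p * (t - b)) > 0) by apply exp_pos.
  replace (- (b - a) * (exp (p * (t - b)) * psi (t - b)) * psi (t - a))
    with ((- (b - a) * psi (t - b) * psi (t - a)) * exp (p * (t - b))) by ring.
  rewrite <- Rmult_assoc. apply Rmult_le_compat_r; lra.
Qed.

Lemma psi_span_pos : 0 < psi (b - a).
Proof.
  rewrite <- Hpsi0. apply (strict_incr_of_pos_derive psi psid); [apply Hpsi | exact Hpsid_pos | lra].
Qed.

End OmegaEstimate.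

Theorem mainTheorem6 (l0 l1 a b : R) (phi psi u : R -> R) :
  l0 <= 0 -> 0 <= l1 -> a < b ->
  is_fundamental2 l0 l1 phi ->
  is_fundamental2 (- l0) (- l1) psi ->
  is_Omega a b l0 l1 u ->
  forall t, a <= t <= b ->
    u t <= (b - a) * Rabs (phi (t - b) * psi (t - a) / psi (b - a)).
Proof.
  intros Hl0 Hl1 Hab [[Cphi Lphi] [phi0 phid0]] [[Cpsi Lpsi] [psi0 psid0]]
    [[Cu _] [ua [ub Lu]]] t Ht.
  pose proof (solves2_of_L2 2 _ _ _ phi (le_n _) Cphi Lphi) as Sphi.
  pose proof (solves2_of_L2 3 _ _ _ u ltac:(lia) Cu Lu) as Su.
  assert (Spsi : solves2 (- (l0 + l1)) (- (l0 * l1)) 0 psi (Derive psi) (Derive (Derive psi))).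
  { pose proof (solves2_of_L2 2 _ _ _ psi (le_n _) Cpsi Lpsi) as S.
    replace (- (l0 + l1)) with (- l0 + - l1) by ring.
    replace (l0 * l1) with (- l0 * - l1) by ring. exact S. }
  pose proof (adjoint_fundamental_increasing l0 l1 _ _ _ Hl0 Hl1 Spsi psi0 psid0) as Hinc.
  (* phi = e^{(l0 + l1) x} psi, both solving the same initial value problem *)
  assert (Hphi : phi (t - b) = exp ((l0 + l1) * (t - b)) * psi (t - b)).
  { apply (solves2_unique l0 l1 0 _ _ _ _ _ _ Sphi (solves2_exp_twist _ _ _ _ _ Spsi)).
    - rewrite phi0, psi0; ring.
    - rewrite phid0, psi0, psid0, Rmult_0_r, exp_0; ring. }
  pose proof (omega_estimate _ _ _ _ _ _ _ _ _ _ Su ua ub Spsi psi0 psid0 Hinc t Ht) as Hest.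
  pose proof (psi_span_pos _ _ _ _ _ _ _ Hab Spsi psi0 Hinc) as Hpos.
  rewrite <- Hphi in Hest.
  apply Rle_trans with ((b - a) * - (phi (t - b) * psi (t - a) / psi (b - a))).
  - apply Rmult_le_reg_r with (psi (b - a)); [exact Hpos|].
    replace ((b - a) * - (phi (t - b) * psi (t - a) / psi (b - a)) * psi (b - a))
      with (- (b - a) * phi (t - b) * psi (t - a)) by (field; lra).
    exact Hest.
  - apply Rmult_le_compat_l; [lra|]. rewrite <- Rabs_Ropp. apply Rle_abs.
Qed.
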